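(* Fix $\lambda_s>0$, $\lambda>0$, $\alpha\in(1,2]$ and $c>0$, where in the case $\alpha=2$ we require $c<\frac12$. For each $n\ge 2$ let $\tilde n(n)$ be an integer with $0\le\tilde n(n)\le\min\{\binom n2, c\,n^\alpha\}$. Then there exist $C'>0$ and $N$ such that for all $n\ge N$ the average age $\Delta=\frac1n\sum_{i=1}^n\Delta_i$ of the greedy jammed network $G^{\mathrm{gr}}\big(n,\binom n2-\tilde n(n)\big)$ satisfies $\Delta\le C' n^{\alpha-1}$.
   Context: Version-age model. A gossip network on a finite node set $\mathcal N$ is specified by source rates $\lambda_{0j}>0$ and gossip rates $\lambda_{ij}\ge 0$ ($i\neq j$; rate at which $i$ sends to $j$); $\lambda_s>0$ is the source's update rate. For nonempty $S\subseteq\mathcal N$ let $N(S)=\{i\in\mathcal N\setminus S:\ \sum_{j\in S}\lambda_{ij}>0\}$ and define $$\Delta_S=\frac{\lambda_s+\sum_{i\in N(S)}\big(\sum_{j\in S}\lambda_{ij}\big)\Delta_{S\cup\{i\}}}{\sum_{j\in S}\lambda_{0j}+\sum_{i\in N(S)}\sum_{j\in S}\lambda_{ij}}$$ (well defined by downward induction on $|S|$); $\Delta_i=\Delta_{\{i\}}$. Networks with uniform link rate: node set $\{1,\dots,n\}$, $\lambda_{0j}=\lambda/n$ for all $j$, and a set of links (unordered pairs of distinct nodes); for each link $\{a,b\}$, $\lambda_{ab}=\lambda_{ba}=\lambda/n$, and $\lambda_{ab}=0$ otherwise. The fully connected network has all $\binom n2$ pairs as links; $\tilde n$ jammers remove $\tilde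 n$ distinct links, leaving $\bar n=\binom n2-\tilde n$ links. Greedy configuration $G^{\mathrm{gr}}(n,\bar n)$ for $0\le\bar n\le\binom n2$: write uniquely $\bar n=\binom k2+c$ with $1\le k\le n$ and $0\le c\le k-1$; the links are all pairs $\{a,b\}$ with $1\le a<b\le k$, together with (if $c>0$) the pairs $\{j,k+1\}$ for $1\le j\le c$; there are no other links. *)

From HB Require Import structures.
From mathcomp Require Import all_boot all_order all_algebra.
From mathcomp Require Import reals exp.
Set Implicit Arguments. Unset Strict Implicit. Unset Printing Implicit Defensive.
Import Order.TTheory GRing.Theory Num.Theory.
Local Open Scope ring_scope.

Section VersionAge.
Variables (R : realType) (n : nat).
(* Node set N = 'I_n (node i of the paper is the ordinal i-1).
   l0 j  = lambda_{0j} (source rate to j),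
   l i j = lambda_{ij} (rate at which i sends to j),
   ls    = lambda_s. *)
Variables (l0 : 'I_n -> R) (l : 'I_n -> 'I_n -> R) (ls : R).

Definition inflow (S : {set 'I_n}) (i : 'I_n) : R := \sum_(j in S) l i j.

Definition nbr (S : {set 'I_n}) : {set 'I_n} :=
  [set i | (i \notin S) && (0 < inflow S i)].

(* Downward recursion on |S|, with fuel k = n - |S|.  At fuel 0 (S = N)
   N(S) is empty and the formula reduces to ls / sum_{j in S} l0 j. *)
Fixpoint Dfuel (k : nat) (S : {set 'I_n}) : R :=
  match k with
  | 0 => ls / (\sum_(j in S) l0 j)
  | k'.+1 =>
      (ls + \sum_(i in nbr S) inflow S i * Dfuel k' (S :|: [set i]))
      / (\sum_(j in S) l0 j + \sum_(i in nbr S) inflow S i)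
  end.

Definition DeltaS (S : {set 'I_n}) : R := Dfuel (n - #|S|) S.

Definition Delta_i (i : 'I_n) : R := DeltaS [set i].

Definition avg_age : R := (n%:R)^-1 * \sum_(i < n) Delta_i i.
End VersionAge.

(* Network with uniform link rate lam on node set 'I_n with link relation
   link (assumed symmetric): lambda_{0j} = lam/n, lambda_{ab} = lam/n on links. *)
Definition unif_l0 (R : realType) (n : nat) (lam : R) : 'I_n -> R :=
  fun _ => lam / n%:R.
Definition unif_l (R : realType) (n : nat) (lam : R) (link : rel 'I_n)
  : 'I_n -> 'I_n -> R := fun a b => if link a b then lam / n%:R else 0.

(* Unique decomposition nbar = 'C(k,2) + c with 1 <= k <= n, 0 <= c <= k-1
   (for nbar <= 'C(n,2), n >= 1): k is the largest k <= n with 'C(k,2) <= nbar. *)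
Definition gr_k (n nbar : nat) : nat := (\max_(k < n.+1 | 'C(k, 2) <= nbar) k)%N.
Definition gr_c (n nbar : nat) : nat := (nbar - 'C(gr_k n nbar, 2))%N.

(* Greedy configuration G^gr(n, nbar), 0-indexed: paper's nodes 1..k are
   ordinals 0..k-1, paper's node k+1 is ordinal k, paper's nodes 1..c are 0..c-1. *)
Definition gr_link (n nbar : nat) : rel 'I_n := fun a b =>
  let k := gr_k n nbar in let c := gr_c n nbar in
  ([&& (a : nat) < k, (b : nat) < k & a != b]
   || (0 < c) && ((((a : nat) == k) && ((b : nat) < c))
                  || (((b : nat) == k) && ((a : nat) < c))))%N.

Definition greedy_avg_age (R : realType) (ls lam : R) (n nbar : nat) : R :=
  avg_age (@unif_l0 R n lam) (@unif_l R n lam (@gr_link n nbar)) ls.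

(* Delta_S is defined by a downward recursion on |S|.  Hence any function B on
   nonempty node sets satisfying that recursion with "<=" (a supersolution)
   dominates Delta_S: this comparison principle is proved first, by induction
   on the fuel n - |S|.

   The greedy network contains a clique on its first k nodes.  For a uniform
   network (all rates u = lam / n) containing a k-clique, the potential
   B(S) = (ls / u) H(|S meet clique|), with H(m) = sum_(j = m..k) 1/(j(k+1-j))
   and H(0) = 1, is a supersolution.  So clique nodes have age at most
   (ls / u) H(1), the other nodes at most ls / u, and
   avg_age <= (ls / lam) (k H(1) + (n - k)).

   Finally, with e = alpha - 1: k H(1) <= 2 harm(k) <= 2 + 2 n^e / e (using
   harm n <= 1 + ln n and ln n <= n^e / e), and the maximality of the greedy
   clique size gives n - k <= 1 + 2 t / n <= 1 + 2 c n^e for t removed links. *)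

From HB Require Import structures.
From mathcomp Require Import all_boot all_order all_algebra.
From mathcomp Require Import reals exp.
From mathcomp Require Import ring lra zify.
Import Order.TTheory GRing.Theory Num.Theory.
Local Open Scope ring_scope.
Set Implicit Arguments. Unset Strict Implicit. Unset Printing Implicit Defensive.

Section Supersolution.
Variables (R : realType) (n : nat) (l0 : 'I_n -> R) (l : 'I_n -> 'I_n -> R) (ls : R).
Hypothesis l0_gt0 : forall j, 0 < l0 j.

(* B is a supersolution when it satisfies the defining recursion of Delta_S
   with "<=" in place of "=", after clearing the (positive) denominator. *)
Definition supersolution (B : {set 'I_n} -> R) : Prop :=
  forall S : {set 'I_n}, S != set0 ->
    ls + \sum_(i in nbr l S) inflow l S i * B (S :|: [set i]) <=
    (\sum_(j in S) l0 j + \sum_(i in nbr l S) inflow l S i) * B S.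

Lemma source_rate_gt0 (S : {set 'I_n}) : S != set0 -> 0 < \sum_(j in S) l0 j.
Proof.
case/set0Pn=> j jS; rewrite (bigD1 j) //= ltr_pwDl //.
by apply: sumr_ge0 => i _; exact: ltW.
Qed.

Lemma nbr_rate_ge0 (S : {set 'I_n}) : 0 <= \sum_(i in nbr l S) inflow l S i.
Proof. by apply: sumr_ge0 => i; rewrite inE => /andP[_ /ltW]. Qed.

Variable B : {set 'I_n} -> R.
Hypothesis B_super : supersolution B.

Lemma Dfuel_le_supersolution f (S : {set 'I_n}) :
  (#|S| + f = n)%N -> S != set0 -> Dfuel l0 l ls f S <= B S.
Proof.
elim: f S => [|f IH] S cardS S0 /=.
  have SN : S = [set: 'I_n].
    by apply/eqP; rewrite eqEcard subsetT cardsT card_ord; apply/eqP; lia.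
  have := B_super S0; have -> : nbr l S = set0.
    by apply/setP => i; rewrite !inE SN in_setT.
  by rewrite !big_set0 !addr0 ler_pdivrMr ?source_rate_gt0 // mulrC.
have den_gt0 : 0 < \sum_(j in S) l0 j + \sum_(i in nbr l S) inflow l S i.
  by rewrite ltr_wpDr ?nbr_rate_ge0 ?source_rate_gt0.
rewrite ler_pdivrMr // mulrC; apply: le_trans (B_super S0).
rewrite lerD2l; apply: ler_sum => i; rewrite inE => /andP[iS inflow_gt0].
apply: ler_wpM2l; first exact: ltW.
apply: IH; last by apply/set0Pn; exists i; rewrite !inE eqxx orbT.
by rewrite setUC cardsU1 iS add1n addSn -addnS.
Qed.

Lemma DeltaS_le_supersolution (S : {set 'I_n}) : S != set0 -> DeltaS l0 l ls S <= B S.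
Proof.
apply: Dfuel_le_supersolution.
have : (#|S| <= n)%N by rewrite -[n in (_ <= n)%N]card_ord max_card.
lia.
Qed.
End Supersolution.

Section CliqueWeights.
Variables (R : realFieldType) (k : nat).

Definition pair_weight (j : nat) : R := ((j * (k.+1 - j))%:R)^-1.

Definition tail_weight (m : nat) : R :=
  if m == 0%N then 1 else \sum_(m <= j < k.+1) pair_weight j.

Lemma pair_weight_ge0 j : 0 <= pair_weight j.
Proof. by rewrite /pair_weight invr_ge0 ler0n. Qed.

Lemma tail_weight_ge0 m : 0 <= tail_weight m.
Proof.
by rewrite /tail_weight; case: eqP => // _; apply: sumr_ge0 => j _; exact: pair_weight_ge0.
Qed.

Lemma tail_weightS m : (1 <= m <= k)%N -> tail_weight m = pair_weight m + tail_weight m.+1.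
Proof. by case: m => // m /= mk; rewrite /tail_weight big_ltn. Qed.

Lemma pair_weight_le_tail m : (1 <= m <= k)%N -> pair_weight m <= tail_weight m.
Proof. by move=> mk; rewrite tail_weightS // lerDl tail_weight_ge0. Qed.

(* Each of the k terms of H(1) is at most 1/k, as j (k+1-j) >= k for 1 <= j <= k. *)
Lemma tail_weight1_le1 : tail_weight 1 <= 1.
Proof.
rewrite /tail_weight /=; have [->|k_gt0] := posnP k; first by rewrite big_geq.
apply: (@le_trans _ _ (\sum_(1 <= j < k.+1) (k%:R)^-1)).
  rewrite big_nat_cond [X in _ <= X]big_nat_cond; apply: ler_sum => j /andP[/andP[j1 jk] _].
  rewrite /pair_weight lef_pV2 ?posrE ?ltr0n ?ler_nat //; nia.
by rewrite sumr_const_nat subn1 succnK -[_ *+ k]mulr_natr mulVf // pnatr_eq0 -lt0n.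
Qed.

Lemma tail_weight_le1 m : tail_weight m <= 1.
Proof.
case: m => [|m]; first by rewrite /tail_weight.
apply: le_trans tail_weight1_le1; rewrite /tail_weight /=.
have [km|mk] := leqP k.+1 m.+1.
  by rewrite big_geq // sumr_ge0 // => j _; exact: pair_weight_ge0.
have mk' : (m.+1 <= k.+1)%N := ltnW mk.
rewrite (@big_cat_nat _ _ _ m.+1 1) //= lerDr.
by apply: sumr_ge0 => j _; exact: pair_weight_ge0.
Qed.

Lemma pair_weight_balance m : (1 <= m <= k)%N ->
  m%:R * pair_weight m + (k - m)%:R * (m%:R * pair_weight m) = 1.
Proof.
move=> /andP[m_gt0 mk].
have -> : m%:R * pair_weight m + (k - m)%:R * (m%:R * pair_weight m) =
    ((1 + (k - m)) * m)%:R * pair_weight m by rewrite natrM natrD; ring.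
rewrite /pair_weight.
have -> : ((1 + (k - m)) * m = m * (k.+1 - m))%N by rewrite mulnC subSn.
by rewrite mulfV // pnatr_eq0 muln_eq0 negb_or -!lt0n m_gt0 subn_gt0 ltnS.
Qed.

(* The arithmetic core of the supersolution inequality: a set S with s nodes,
   m of them in the clique, and at least k - m clique neighbours outside S. *)
Lemma tail_weight_cover (s x m : nat) : (0 < s)%N -> (m <= s)%N -> (m <= k)%N ->
  ((0 < m)%N -> (k - m <= x)%N) ->
  1 <= s%:R * tail_weight m + x%:R * (m%:R * pair_weight m).
Proof.
move=> s_gt0 ms mk; have [->|m_gt0] := posnP m => [_|/(_ isT) kmx].
  by rewrite /tail_weight mulr1 mul0r mulr0 addr0 ler1n.
have m1k : (1 <= m <= k)%N by rewrite m_gt0.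
rewrite -[X in X <= _](pair_weight_balance m1k); apply: lerD.
  apply: ler_pM; rewrite ?ler0n ?pair_weight_ge0 ?ler_nat //.
  exact: pair_weight_le_tail.
by rewrite ler_wpM2r ?mulr_ge0 ?ler0n ?pair_weight_ge0 ?ler_nat.
Qed.
End CliqueWeights.

Section CliqueSupersolution.
Variables (R : realType) (n k : nat) (u ls : R) (link : rel 'I_n).
Hypotheses (u_gt0 : 0 < u) (ls_gt0 : 0 < ls) (k_le_n : (k <= n)%N).
Hypothesis clique_linked :
  forall a b : 'I_n, (a < k)%N -> (b < k)%N -> a != b -> link a b.

Let src : 'I_n -> R := fun=> u.
Let rate : 'I_n -> 'I_n -> R := fun a b => if link a b then u else 0.

Definition clique : {set 'I_n} := [set i : 'I_n | (i < k)%N].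

Definition clique_bound (S : {set 'I_n}) : R := ls / u * tail_weight R k #|S :&: clique|.

Lemma card_clique : #|clique| = k.
Proof.
have -> : clique = [set widen_ord k_le_n i | i in 'I_k].
  apply/setP => x; rewrite /clique inE; apply/idP/imsetP => [xk|[y _ ->]].
    by exists (Ordinal xk) => //; apply: val_inj.
  exact: (ltn_ord y).
rewrite card_imset ?card_ord // => a b /(congr1 val) /=; exact: val_inj.
Qed.

Lemma card_cliqueU1 (S : {set 'I_n}) i : i \notin S ->
  #|(S :|: [set i]) :&: clique| = (#|S :&: clique| + (i \in clique))%N.
Proof.
move=> iS; rewrite setIUl; case iK: (i \in clique).
  rewrite (setIidPl (_ : [set i] \subset clique)) ?sub1set // setUC cardsU1.
  by rewrite in_setI (negbTE iS) /= addnC.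
have -> : [set i] :&: clique = set0.
  by apply/setP => x; rewrite in_setI in_set1 in_set0; case: eqP => // ->.
by rewrite setU0 addn0.
Qed.

Lemma inflow_clique_ge (S : {set 'I_n}) i : i \in clique -> i \notin S ->
  #|S :&: clique|%:R * u <= inflow rate S i.
Proof.
move=> iK iS; rewrite /inflow (big_setID clique) /=.
rewrite (eq_bigr (fun=> u)) => [|j]; last first.
  rewrite !inE => /andP[jS jK]; rewrite /rate clique_linked //; first by rewrite inE in iK.
  by apply: contraNneq iS => ->.
rewrite sumr_const -[u *+ _]mulr_natl lerDl; apply: sumr_ge0 => j _.
by rewrite /rate; case: ifP => // _; exact: ltW.
Qed.

Lemma clique_nbr_ge (S : {set 'I_n}) : (0 < #|S :&: clique|)%N ->
  (k - #|S :&: clique| <= #|nbr rate S :&: clique|)%N.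
Proof.
move=> m_gt0; rewrite -card_clique [S :&: _]setIC -cardsD.
apply: subset_leq_card; apply/subsetP => x; rewrite !inE => /andP[xS xK].
rewrite xK xS andbT /=; apply: lt_le_trans (inflow_clique_ge _ xS); last by rewrite inE.
by rewrite mulr_gt0 // ltr0n.
Qed.

(* Adding a neighbour never increases H, and adding a clique neighbour i lowers
   inflow_i H(m) by at least m u g(m), since H(m + 1) = H(m) - g(m) and
   inflow_i >= m u; this is the summed form of that observation. *)
Lemma nbr_weight_le (S : {set 'I_n}) (m := #|S :&: clique|) :
  \sum_(i in nbr rate S) inflow rate S i * tail_weight R k #|(S :|: [set i]) :&: clique|
  <= (\sum_(i in nbr rate S) inflow rate S i) * tail_weight R k m
     - #|nbr rate S :&: clique|%:R * (m%:R * u * pair_weight R k m).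
Proof.
set N := nbr rate S; set d := m%:R * u * pair_weight R k m.
have step i : i \in N -> inflow rate S i * tail_weight R k #|(S :|: [set i]) :&: clique|
    <= inflow rate S i * tail_weight R k m - (if i \in clique then d else 0).
  rewrite inE => /andP[iS inflow_gt0]; rewrite card_cliqueU1 // -/m.
  case iK: (i \in clique); last by rewrite addn0 subr0.
  have [m0|m_gt0] := posnP m.
    rewrite /d m0 !mul0r subr0; apply: ler_wpM2l; first exact: ltW.
    exact: tail_weight_le1.
  have mk : (1 <= m <= k)%N by rewrite m_gt0 -card_clique subset_leq_card ?subsetIr.
  rewrite addn1 [tail_weight R k m](tail_weightS R mk) mulrDr lerBrDr.
  rewrite [X in _ <= X]addrC lerD2l /d ler_wpM2r ?pair_weight_ge0 //.
  exact: inflow_clique_ge.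
apply: le_trans (ler_sum _ step) _.
have card_NK : #|[pred i in N | i \in clique]| = #|N :&: clique|.
  by apply: eq_card => i; rewrite !inE.
by rewrite sumrB -mulr_suml -big_mkcondr /= sumr_const card_NK mulr_natl.
Qed.

Lemma clique_supersolution : supersolution src rate ls clique_bound.
Proof.
move=> S S0; rewrite /clique_bound.
set m := #|S :&: clique|; set W := \sum_(i in nbr rate S) inflow rate S i.
set X := #|nbr rate S :&: clique|; set beta := ls / u.
have beta_u : beta * u = ls by rewrite divfK ?gt_eqF.
have cover : 1 <= #|S|%:R * tail_weight R k m + X%:R * (m%:R * pair_weight R k m).
  apply: tail_weight_cover; first by rewrite card_gt0.
  - by rewrite subset_leq_card ?subsetIl.
  - by rewrite -card_clique subset_leq_card ?subsetIr.
  - exact: clique_nbr_ge.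
have nbr_le := nbr_weight_le S.
have -> : \sum_(j in S) src j = #|S|%:R * u by rewrite sumr_const mulr_natl.
rewrite (eq_bigr (fun i => beta * (inflow rate S i *
  tail_weight R k #|(S :|: [set i]) :&: clique|))) => [|i _]; last by rewrite mulrCA.
rewrite -mulr_sumr.
have beta_ge0 : 0 <= beta by rewrite divr_ge0 // ltW.
have := ler_wpM2l beta_ge0 nbr_le; have := ler_wpM2l (ltW ls_gt0) cover.
rewrite -beta_u -/m -/W -/X; nra.
Qed.

Lemma Delta_i_clique_le (i : 'I_n) :
  Delta_i src rate ls i <= ls / u * (if (i < k)%N then tail_weight R k 1 else 1).
Proof.
have i0 : [set i] != set0 by apply/set0Pn; exists i; rewrite inE.
apply: le_trans (DeltaS_le_supersolution (fun=> u_gt0) clique_supersolution i0) _.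
rewrite /clique_bound; case: ifP => ik.
  by rewrite (setIidPl _) ?sub1set ?inE // cards1.
apply: ler_wpM2l; first by rewrite divr_ge0 // ltW.
exact: tail_weight_le1.
Qed.
End CliqueSupersolution.

Lemma sum_prefix_split (V : nmodType) (n k : nat) (a b : V) : (k <= n)%N ->
  \sum_(i < n) (if (i < k)%N then a else b) = a *+ k + b *+ (n - k).
Proof.
move=> kn; rewrite -(big_mkord xpredT (fun i => if (i < k)%N then a else b)).
rewrite (@big_cat_nat _ _ _ k) //=.
under eq_big_nat => i /andP[_ ik] do rewrite ik.
under [X in _ + X]eq_big_nat => i /andP[ki _] do rewrite ltnNge ki.
by rewrite !sumr_const_nat subn0.
Qed.

Lemma avg_age_uniform_clique_le (R : realType) (n k : nat) (lam ls : R) (link : rel 'I_n) :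
  0 < lam -> 0 < ls -> (0 < n)%N -> (k <= n)%N ->
  (forall a b : 'I_n, (a < k)%N -> (b < k)%N -> a != b -> link a b) ->
  avg_age (unif_l0 lam) (unif_l lam link) ls
    <= ls / lam * (k%:R * tail_weight R k 1 + (n - k)%:R).
Proof.
move=> lam_gt0 ls_gt0 n_gt0 kn linked.
have u_gt0 : 0 < lam / n%:R by rewrite divr_gt0 ?ltr0n.
have node_le := Delta_i_clique_le u_gt0 ls_gt0 kn linked.
rewrite /avg_age; apply: le_trans (ler_wpM2l _ (ler_sum _ (fun i _ => node_le i))) _.
  by rewrite invr_ge0 ler0n.
rewrite -mulr_sumr sum_prefix_split // -[tail_weight R k 1 *+ k]mulr_natl mulrA.
suff -> : (n%:R)^-1 * (ls / (lam / n%:R)) = ls / lam by [].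
by field; rewrite pnatr_eq0 -lt0n n_gt0 gt_eqF.
Qed.

Section Harmonic.
Variable R : realType.

Definition harm (k : nat) : R := \sum_(1 <= j < k.+1) (j%:R)^-1.

Lemma harm_mono k m : (k <= m)%N -> harm k <= harm m.
Proof.
move=> km; rewrite /harm (@big_cat_nat _ _ _ k.+1 1 m.+1) //= lerDl.
by apply: sumr_ge0 => j _; rewrite invr_ge0 ler0n.
Qed.

(* 1/(m+1) <= ln(m+1) - ln m, from ln(1 + x) <= x at x = -1/(m+1). *)
Lemma inv_le_lnS m : (0 < m)%N -> (m.+1%:R : R)^-1 <= ln m.+1%:R - ln m%:R.
Proof.
move=> m_gt0; set y : R := m.+1%:R; have y_gt0 : 0 < y by rewrite ltr0n.
have y_inv_lt1 : y^-1 < 1 by rewrite invf_lt1 // ltr1n ltnS.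
have -> : (m%:R : R) = y * (1 + - y^-1).
  by rewrite mulrDr mulr1 mulrN mulfV ?gt_eqF // /y -natr1 addrK.
rewrite lnM ?posrE ?subr_gt0 // opprD addrA subrr add0r lerNr.
by apply: le_ln1Dx; rewrite ltrN2.
Qed.

Lemma harm_le_ln m : (0 < m)%N -> harm m <= 1 + ln m%:R.
Proof.
elim: m => // m IH _; have [->|m_gt0] := posnP m.
  by rewrite /harm big_nat1 ln1 addr0 invr1.
rewrite /harm big_nat_recr //= -/(harm m).
have := IH m_gt0; have := inv_le_lnS m_gt0.
set y := (m.+1%:R : R)^-1; set a := ln (m.+1%:R : R); set b := ln (m%:R : R); lra.
Qed.

(* ln x <= x^e / e for x, e > 0 (apply ln y <= y - 1 < y to y = x^e). *)
Lemma ln_le_powR (x e : R) : 0 < x -> 0 < e -> ln x <= x `^ e / e.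
Proof.
move=> x_gt0 e_gt0; have := ln_sublinear (powR_gt0 e x_gt0); rewrite ln_powR => h.
by rewrite ler_pdivlMr // mulrC ltW.
Qed.

(* Pairing 1/(j(k+1-j)) = (1/j + 1/(k+1-j)) / (k+1) gives k H(1) <= 2 harm(k). *)
Lemma tail_weight1_le_harm k : k%:R * tail_weight R k 1 <= 2 * harm k.
Proof.
rewrite /tail_weight /= mulr_sumr.
apply: (@le_trans _ _ (\sum_(1 <= j < k.+1) ((j%:R : R)^-1 + ((k.+1 - j)%:R)^-1))).
  apply: ler_sum_nat => j /andP[j1 jk].
  have j_gt0 : (0 : R) < j%:R by rewrite ltr0n.
  have kj_gt0 : (0 : R) < (k.+1 - j)%:R by rewrite ltr0n subn_gt0.
  have -> : (j%:R : R)^-1 + ((k.+1 - j)%:R)^-1 = k.+1%:R * pair_weight R k j.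
    rewrite /pair_weight natrM invfM.
    have -> : (k.+1%:R : R) = j%:R + (k.+1 - j)%:R by rewrite -natrD subnKC // ltnW.
    by field; rewrite !gt_eqF.
  by rewrite ler_wpM2r ?pair_weight_ge0 // ler_nat.
rewrite big_split /= mulr_natl mulr2n; apply: lerD => //.
rewrite big_nat_rev /= le_eqVlt; apply/orP; left; apply/eqP/eq_big_nat => j /andP[j1 jk].
by congr ((_ %:R)^-1); lia.
Qed.

Lemma clique_term_le (k n : nat) (e : R) : (k <= n)%N -> (0 < n)%N -> 0 < e ->
  k%:R * tail_weight R k 1 <= 2 + 2 * (n%:R `^ e / e).
Proof.
move=> kn n_gt0 e_gt0; apply: le_trans (tail_weight1_le_harm k) _.
have := harm_mono kn; have := harm_le_ln n_gt0.
have := @ln_le_powR n%:R e; rewrite ltr0n => /(_ n_gt0 e_gt0).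
set P := n%:R `^ e / e; set L := ln n%:R; lra.
Qed.
End Harmonic.

Lemma bin2_mul m : ('C(m, 2) * 2 = m * m.-1)%N.
Proof.
elim: m => // m IH; rewrite binS bin1 mulnDl IH.
by case: m {IH} => //= m; nia.
Qed.

Lemma gr_k_le n nbar : (gr_k n nbar <= n)%N.
Proof. by apply/bigmax_leqP => i _; rewrite -ltnS. Qed.

Lemma gr_k_max n nbar : (gr_k n nbar < n)%N -> (nbar < 'C((gr_k n nbar).+1, 2))%N.
Proof.
move=> kn; rewrite ltnNge; apply/negP => bin_le.
have := @leq_bigmax_cond _ (fun k : 'I_n.+1 => 'C(k, 2) <= nbar)%N
  (fun k => nat_of_ord k) (Ordinal (kn : (gr_k n nbar).+1 < n.+1)%N) bin_le.
by rewrite -/(gr_k n nbar) /= ltnn.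
Qed.

Lemma greedy_missing_nodes n t (k := gr_k n ('C(n, 2) - t)) :
  (t <= 'C(n, 2))%N -> (k < n)%N -> ((n - k.+1) * n <= 2 * t)%N.
Proof.
move=> t_le kn; have bin_lt := gr_k_max kn; rewrite -/k in bin_lt.
have e1 := bin2_mul n; have e2 := bin2_mul k.+1; rewrite /= in e2.
have : ((n - k.+1) * n <= n * n.-1 - k.+1 * k)%N by nia.
nia.
Qed.

Lemma greedy_missing_le (R : realType) (n t : nat) (c alpha : R) : (0 < n)%N -> 0 <= c ->
  (t <= 'C(n, 2))%N -> t%:R <= c * n%:R `^ alpha ->
  (n - gr_k n ('C(n, 2) - t))%:R <= 1 + 2 * c * n%:R `^ (alpha - 1).
Proof.
move=> n_gt0 c_ge0 t_le t_pow; set k := gr_k n _; set P := n%:R `^ (alpha - 1).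
have n_pos : (0 : R) < n%:R by rewrite ltr0n.
have [->|k_ne_n] := eqVneq k n.
  by rewrite subnn addr_ge0 // !mulr_ge0 ?powR_ge0.
have k_lt : (k < n)%N by rewrite ltn_neqAle k_ne_n gr_k_le.
have n_alpha : n%:R `^ alpha = n%:R * P.
  rewrite /P -{1}(subrKC 1 alpha) (powRD (r := 1)) ?powRr1 ?ler0n //.
  by rewrite pnatr_eq0 -lt0n n_gt0 implybT.
have missing : (n - k.+1)%:R * n%:R <= 2 * c * P * n%:R :> R.
  apply: le_trans (_ : _ <= 2 * t%:R) _.
    by rewrite -natrM -(natrM _ 2) ler_nat greedy_missing_nodes.
  by move: t_pow; rewrite n_alpha; lra.
rewrite ler_pM2r // in missing.
by rewrite -(subnSK k_lt) -natr1; lra.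
Qed.

Unset Implicit Arguments.

Theorem lemma6 (R : realType) (ls lam alpha c : R) (ntil : nat -> nat) :
  0 < ls -> 0 < lam -> 1 < alpha -> alpha <= 2 -> 0 < c ->
  (alpha = 2 -> c < 2^-1) ->
  (forall n : nat, (2 <= n)%N ->
     (ntil n <= 'C(n, 2))%N /\ (ntil n)%:R <= c * (n%:R `^ alpha)) ->
  exists C' : R, 0 < C' /\ exists N : nat, forall n : nat, (N <= n)%N ->
    greedy_avg_age ls lam n ('C(n, 2) - ntil n) <= C' * (n%:R `^ (alpha - 1)).
Proof.
move=> ls_gt0 lam_gt0 alpha_gt1 _ c_gt0 _ ntil_bound.
set e := alpha - 1; have e_gt0 : 0 < e by rewrite subr_gt0.
exists (ls / lam * (3 + 2 / e + 2 * c)); split.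
  have : 0 < 2 / e by rewrite divr_gt0.
  by move=> ?; rewrite mulr_gt0 ?divr_gt0 //; lra.
exists 2%N => n n_ge2; have [t_le t_pow] := ntil_bound n n_ge2.
have n_gt0 : (0 < n)%N by apply: leq_trans n_ge2.
set nbar := ('C(n, 2) - ntil n)%N; set k := gr_k n nbar.
have clique_linked (a b : 'I_n) : (a < k)%N -> (b < k)%N -> a != b -> @gr_link n nbar a b.
  by move=> ak bk ab; rewrite /gr_link -/k ak bk ab.
apply: le_trans (avg_age_uniform_clique_le lam_gt0 ls_gt0 n_gt0 (gr_k_le n nbar)
  clique_linked) _.
rewrite -[X in _ <= X]mulrA; apply: ler_wpM2l; first by rewrite divr_ge0 // ltW.
have := clique_term_le (gr_k_le n nbar) n_gt0 e_gt0.
have := greedy_missing_le n_gt0 (ltW c_gt0) t_le t_pow.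
rewrite -/e -/nbar -/k; set P := n%:R `^ e.
have P_ge1 : 1 <= P.
  by rewrite -(powRr0 n%:R) ler_powR ?ler1n // ltW.
have -> : (3 + 2 / e + 2 * c) * P = 3 * P + 2 * (P / e) + 2 * c * P.
  by field; rewrite gt_eqF.
lra.
Qed.
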